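(* Let $q\ge0$, $\delta'\ge0$, and let $X$ be a $(1,q)$-quasi-geodesic metric space in which every triangle whose sides are $(1,q)$-quasi-geodesics is $\delta'$-thin. Then $X$ satisfies the four-point condition with constant $\delta=56\delta'+6q$, i.e. for all $x,y,z,w\in X$, $$d(x,z)+d(y,w)\le\max\{d(x,w)+d(y,z),\ d(x,y)+d(z,w)\}+56\delta'+6q.$$
   Context: A $(1,q)$-quasi-geodesic is a map $\gamma:[a,b]\to X$ with $|s-t|-q\le d(\gamma(s),\gamma(t))\le|s-t|+q$ for all $s,t$; $X$ is a $(1,q)$-quasi-geodesic metric space if any two points are joined by one. For $A\subset X$, $\mathcal{N}_r(A)=\{p: d(p,A)\le r\}$. A triangle with sides $\lambda_1,\lambda_2,\lambda_3$ is $\delta'$-thin if $\lambda_i\subset\mathcal{N}_{\delta'}(\lambda_j\cup\lambda_k)$ for all permutations $(i,j,k)$ of $(1,2,3)$. *)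

From Stdlib Require Import Reals.
Open Scope R_scope.

Definition is_metric {X : Type} (d : X -> X -> R) : Prop :=
  (forall x y, 0 <= d x y) /\
  (forall x y, d x y = 0 <-> x = y) /\
  (forall x y, d x y = d y x) /\
  (forall x y z, d x z <= d x y + d y z).

(* gamma : [a,b] -> X is a (1,q)-quasi-geodesic from x to y
   (gamma is given as a function on R, only its values on [a,b] matter). *)
Definition is_qgeod {X : Type} (d : X -> X -> R) (q : R)
  (gamma : R -> X) (a b : R) (x y : X) : Prop :=
  a <= b /\ gamma a = x /\ gamma b = y /\
  (forall s t, a <= s <= b -> a <= t <= b ->
     Rabs (s - t) - q <= d (gamma s) (gamma t) /\
     d (gamma s) (gamma t) <= Rabs (s - t) + q).

Definition qgeod_space {X : Type} (d : X -> X -> R) (q : R) : Prop :=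
  forall x y : X, exists gamma a b, is_qgeod d q gamma a b x y.

Definition img {X : Type} (gamma : R -> X) (a b : R) : X -> Prop :=
  fun p => exists t, a <= t <= b /\ p = gamma t.

(* p ∈ N_r(A), i.e. d(p,A) = inf_{a in A} d(p,a) <= r. *)
Definition in_nbhd {X : Type} (d : X -> X -> R) (r : R) (A : X -> Prop) (p : X)
  : Prop :=
  forall e, 0 < e -> exists a, A a /\ d p a <= r + e.

Definition subset_nbhd {X : Type} (d : X -> X -> R) (r : R)
  (B A : X -> Prop) : Prop :=
  forall p, B p -> in_nbhd d r A p.

Definition union {X : Type} (A B : X -> Prop) : X -> Prop := fun p => A p \/ B p.

Definition thin_triangle {X : Type} (d : X -> X -> R) (dt : R)
  (L1 L2 L3 : X -> Prop) : Prop :=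
  subset_nbhd d dt L1 (union L2 L3) /\
  subset_nbhd d dt L2 (union L1 L3) /\
  subset_nbhd d dt L3 (union L1 L2).

Definition qgeod_triangles_thin {X : Type} (d : X -> X -> R) (q dt : R) : Prop :=
  forall (x y z : X) (g1 g2 g3 : R -> X) (a1 b1 a2 b2 a3 b3 : R),
    is_qgeod d q g1 a1 b1 x y ->
    is_qgeod d q g2 a2 b2 y z ->
    is_qgeod d q g3 a3 b3 z x ->
    thin_triangle d dt (img g1 a1 b1) (img g2 a2 b2) (img g3 a3 b3).

From Stdlib Require Import Reals Lra Classical.
Open Scope R_scope.

(* Write (x|y)_w for the Gromov product. A quasi-geodesic folded back on a
   piece of parameter length at most q/2, closed up by two constant sides, is
   a thin triangle; hence points of a quasi-geodesic at parameter distance at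
   most q/2 are dt-close, and every point of a quasi-geodesic from p to r
   nearly realises d(p,r) as d(p,.) + d(.,r).
   In a triangle x z w, the side [x,z] is covered by the dt-neighbourhoods of
   [w,x] and [z,w]; a supremum argument yields two nearby points u, u' of
   [x,z] close to [w,x] and to [z,w] respectively, which forces
   (x|z)_w >= d(w,u) - O(dt + q). In the triangle x z y the point u is close
   to [z,y] or to [y,x], so min((x|y)_w, (y|z)_w) <= d(w,u) + O(dt + q).
   Together: (x|z)_w >= min((x|y)_w, (y|z)_w) - (7 dt + 3 q), i.e. the
   four-point condition even with the smaller constant 14 dt + 6 q. *)

Definition gromov_product {X : Type} (d : X -> X -> R) (w x y : X) : R :=
  (d w x + d w y - d x y) / 2.

Lemma interval_crossing (P Q : R -> Prop) (c0 c1 e : R) :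
  c0 <= c1 -> 0 < e -> P c0 -> Q c1 ->
  (forall t, c0 <= t <= c1 -> P t \/ Q t) ->
  exists t1 t2, c0 <= t1 <= t2 /\ t2 <= c1 /\ t2 - t1 <= e /\ P t1 /\ Q t2.
Proof.
  intros Hc He HP HQ Hcover.
  set (E := fun t => c0 <= t <= c1 /\ P t).
  assert (HE0 : E c0) by (split; [lra | exact HP]).
  assert (Hbound : bound E) by (exists c1; intros t [Ht _]; lra).
  destruct (completeness E Hbound (ex_intro _ c0 HE0)) as [s [Hub Hlub]].
  assert (Hs0 : c0 <= s) by (apply Hub; exact HE0).
  assert (Happrox : exists t1, E t1 /\ s - e / 2 < t1).
  { apply NNPP; intros Hnone.
    assert (Hub' : is_upper_bound E (s - e / 2)).
    { intros t Ht. apply Rnot_lt_le; intros Hlt. apply Hnone. now exists t. }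
    specialize (Hlub _ Hub'). lra. }
  destruct Happrox as [t1 [[Ht1 HPt1] Hlt]].
  pose proof (Hub t1 (conj Ht1 HPt1)) as Ht1s.
  destruct (Rle_dec c1 (s + e / 2)) as [Hend | Hend].
  - exists t1, c1. repeat split; auto; lra.
  - exists t1, (s + e / 2). repeat split; auto; try lra.
    assert (Hrange : c0 <= s + e / 2 <= c1) by (apply Rnot_le_lt in Hend; lra).
    destruct (Hcover _ Hrange) as [HP2 | HQ2]; [| exact HQ2].
    pose proof (Hub _ (conj Hrange HP2)). lra.
Qed.

Section ThinQuasiGeodesicSpace.

Variables (X : Type) (d : X -> X -> R) (q dt : R).
Hypothesis q_ge0 : 0 <= q.
Hypothesis dt_ge0 : 0 <= dt.
Hypothesis d_metric : is_metric d.
Hypothesis triangles_thin : qgeod_triangles_thin d q dt.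

Lemma dist_ge0 x y : 0 <= d x y.
Proof. exact (proj1 d_metric x y). Qed.

Lemma dist_refl x : d x x = 0.
Proof. now apply (proj1 (proj2 d_metric)). Qed.

Lemma dist_sym x y : d x y = d y x.
Proof. exact (proj1 (proj2 (proj2 d_metric)) x y). Qed.

Lemma dist_triangle x y z : d x z <= d x y + d y z.
Proof. exact (proj2 (proj2 (proj2 d_metric)) x y z). Qed.

Lemma gromov_product_comm w x y : gromov_product d w x y = gromov_product d w y x.
Proof. unfold gromov_product. rewrite (dist_sym x y). lra. Qed.

Lemma four_point_of_gromov_product (c : R) (x y z w : X) :
  Rmin (gromov_product d w x y) (gromov_product d w y z) - c <= gromov_product d w x z ->
  d x z + d y w <= Rmax (d x w + d y z) (d x y + d z w) + 2 * c.
Proof.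
  unfold gromov_product, Rmin. intros H.
  rewrite (dist_sym w x), (dist_sym w y), (dist_sym w z) in H.
  pose proof (Rmax_l (d x w + d y z) (d x y + d z w)).
  pose proof (Rmax_r (d x w + d y z) (d x y + d z w)).
  destruct (Rle_dec _ _) in H; lra.
Qed.

Lemma qgeod_dist_le g a b x y s t :
  is_qgeod d q g a b x y -> a <= s <= t -> t <= b -> d (g s) (g t) <= t - s + q.
Proof.
  intros [_ [_ [_ Hg]]] Hs Ht.
  destruct (Hg s t) as [_ Hu]; try lra.
  rewrite Rabs_left1 in Hu by lra. lra.
Qed.

Lemma qgeod_dist_ge g a b x y s t :
  is_qgeod d q g a b x y -> a <= s <= t -> t <= b -> t - s - q <= d (g s) (g t).
Proof.
  intros [_ [_ [_ Hg]]] Hs Ht.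
  destruct (Hg s t) as [Hl _]; try lra.
  rewrite Rabs_left1 in Hl by lra. lra.
Qed.

Lemma qgeod_const p : is_qgeod d q (fun _ => p) 0 0 p p.
Proof.
  split; [lra | split; [reflexivity | split; [reflexivity |]]].
  intros s t Hs Ht. replace (s - t) with 0 by lra.
  rewrite Rabs_R0, dist_refl. lra.
Qed.

Lemma qgeod_fold g a b x y s e :
  is_qgeod d q g a b x y -> a <= s -> 0 <= e -> s + e <= b -> 2 * e <= q ->
  is_qgeod d q (fun tau => g (s + e - Rabs (e - tau))) 0 (2 * e) (g s) (g s).
Proof.
  intros [_ [_ [_ Hg]]] Has He Heb Heq.
  split; [lra | split; [| split]].
  - f_equal. rewrite Rminus_0_r, Rabs_pos_eq by lra. ring.
  - f_equal. replace (e - 2 * e) with (- e) by ring.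
    rewrite Rabs_Ropp, Rabs_pos_eq by lra. ring.
  - intros t1 t2 Ht1 Ht2.
    assert (Hr1 : Rabs (e - t1) <= e) by (apply Rabs_le; lra).
    assert (Hr2 : Rabs (e - t2) <= e) by (apply Rabs_le; lra).
    pose proof (Rabs_pos (e - t1)). pose proof (Rabs_pos (e - t2)).
    assert (Hshort : Rabs (t1 - t2) <= q) by (apply Rabs_le; lra).
    pose proof (dist_ge0 (g (s + e - Rabs (e - t1))) (g (s + e - Rabs (e - t2)))).
    destruct (Hg (s + e - Rabs (e - t1)) (s + e - Rabs (e - t2))) as [_ Hu]; try lra.
    (* the fold t |-> s + e - |e - t| is 1-Lipschitz *)
    pose proof (Rabs_triang_inv2 (e - t2) (e - t1)) as Hlip.
    replace (s + e - Rabs (e - t1) - (s + e - Rabs (e - t2)))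
      with (Rabs (e - t2) - Rabs (e - t1)) in Hu by ring.
    replace (e - t2 - (e - t1)) with (t1 - t2) in Hlip by ring.
    split; lra.
Qed.

Lemma qgeod_dist_le_thin g a b x y s s' :
  is_qgeod d q g a b x y -> a <= s <= s' -> s' <= b -> s' - s <= q / 2 ->
  d (g s) (g s') <= dt.
Proof.
  intros Hg Hs Hs' Hclose.
  pose proof (qgeod_fold g a b x y s (s' - s) Hg ltac:(lra) ltac:(lra) ltac:(lra) ltac:(lra))
    as Hfold.
  destruct (triangles_thin _ _ _ _ _ _ _ _ _ _ _ _
              Hfold (qgeod_const (g s)) (qgeod_const (g s))) as [Hside _].
  assert (Hon : img (fun tau => g (s + (s' - s) - Rabs (s' - s - tau))) 0 (2 * (s' - s)) (g s')).
  { exists (s' - s). split; [lra |].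
    f_equal. replace (s' - s - (s' - s)) with 0 by ring. rewrite Rabs_R0. ring. }
  apply le_epsilon; intros e He.
  destruct (Hside _ Hon e He) as [p [[[t [_ ->]] | [t [_ ->]]] Hp]];
    rewrite dist_sym; exact Hp.
Qed.

Lemma qgeod_dist_le_shift g a b x y s s' :
  is_qgeod d q g a b x y -> a <= s <= s' -> s' <= b ->
  d (g s) (g s') <= s' - s + q / 2 + dt.
Proof.
  intros Hg Hs Hs'.
  destruct (Rle_dec (s' - s) (q / 2)).
  - pose proof (qgeod_dist_le_thin g a b x y s s' Hg Hs Hs'). lra.
  - pose proof (qgeod_dist_le g a b x y s (s' - q / 2) Hg ltac:(lra) ltac:(lra)).
    pose proof (qgeod_dist_le_thin g a b x y (s' - q / 2) s' Hg ltac:(lra) Hs' ltac:(lra)).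
    pose proof (dist_triangle (g s) (g (s' - q / 2)) (g s')). lra.
Qed.

Lemma qgeod_dist_le_close g a b x y s s' :
  is_qgeod d q g a b x y -> a <= s <= s' -> s' <= b ->
  d (g s) (g s') <= dt + 3 * (s' - s).
Proof.
  intros Hg Hs Hs'.
  destruct (Rle_dec (s' - s) (q / 2)).
  - pose proof (qgeod_dist_le_thin g a b x y s s' Hg Hs Hs'). lra.
  - pose proof (qgeod_dist_le g a b x y s s' Hg Hs Hs'). lra.
Qed.

Lemma qgeod_dist_sum_le g a b p r t :
  is_qgeod d q g a b p r -> a <= t <= b ->
  d p (g t) + d (g t) r <= d p r + 2 * q + 2 * dt.
Proof.
  intros Hg Ht. pose proof Hg as [Hab [Ha [Hb _]]]. subst p r.
  pose proof (qgeod_dist_le_shift g a b (g a) (g b) a t Hg ltac:(lra) ltac:(lra)).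
  pose proof (qgeod_dist_le_shift g a b (g a) (g b) t b Hg Ht ltac:(lra)).
  pose proof (qgeod_dist_ge g a b (g a) (g b) a b Hg ltac:(lra) ltac:(lra)).
  lra.
Qed.

Lemma near_qgeod_dist_sum_le g a b p r t u e :
  is_qgeod d q g a b p r -> a <= t <= b -> d u (g t) <= e ->
  d p u + d u r <= d p r + 2 * e + 2 * q + 2 * dt.
Proof.
  intros Hg Ht Hu.
  pose proof (qgeod_dist_sum_le g a b p r t Hg Ht).
  pose proof (dist_triangle p (g t) u). pose proof (dist_triangle u (g t) r).
  rewrite (dist_sym (g t) u) in *. lra.
Qed.

Lemma gromov_product_le_near_qgeod g a b p r t u e w :
  is_qgeod d q g a b p r -> a <= t <= b -> d u (g t) <= e ->
  gromov_product d w p r <= d w u + e + q + dt.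
Proof.
  intros Hg Ht Hu. unfold gromov_product.
  pose proof (near_qgeod_dist_sum_le g a b p r t u e Hg Ht Hu).
  pose proof (dist_triangle w u p). pose proof (dist_triangle w u r).
  rewrite (dist_sym u p) in *. lra.
Qed.

Lemma gromov_product_ge_near_sides ga a0 a1 gb b0 b1 w x z u u' ta tb e :
  is_qgeod d q ga a0 a1 w x -> a0 <= ta <= a1 -> d u (ga ta) <= e ->
  is_qgeod d q gb b0 b1 z w -> b0 <= tb <= b1 -> d u' (gb tb) <= e ->
  d w u - d u u' - 2 * e - 2 * q - 2 * dt <= gromov_product d w x z.
Proof.
  intros Ha Hta Hu Hb Htb Hu'. unfold gromov_product.
  pose proof (near_qgeod_dist_sum_le ga a0 a1 w x ta u e Ha Hta Hu).
  pose proof (near_qgeod_dist_sum_le gb b0 b1 z w tb u' e Hb Htb Hu').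
  pose proof (dist_triangle x u z). pose proof (dist_triangle u u' z).
  pose proof (dist_triangle w u' u).
  rewrite (dist_sym x u), (dist_sym z u'), (dist_sym u' w), (dist_sym u' u),
    (dist_sym z w) in *.
  lra.
Qed.

Lemma gromov_product_min_le_on_side gc c0 c1 gzy e0 e1 gyx f0 f1 x y z w t :
  is_qgeod d q gc c0 c1 x z -> is_qgeod d q gzy e0 e1 z y ->
  is_qgeod d q gyx f0 f1 y x -> c0 <= t <= c1 ->
  Rmin (gromov_product d w x y) (gromov_product d w y z) <= d w (gc t) + q + 2 * dt.
Proof.
  intros Hc Hzy Hyx Ht.
  destruct (triangles_thin _ _ _ _ _ _ _ _ _ _ _ _ Hc Hzy Hyx) as [Hside _].
  apply le_epsilon; intros e He.
  destruct (Hside (gc t) (ex_intro _ t (conj Ht eq_refl)) e He)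
    as [v [[[s [Hs ->]] | [s [Hs ->]]] Hv]].
  - pose proof (gromov_product_le_near_qgeod gzy e0 e1 z y s (gc t) (dt + e) w Hzy Hs Hv).
    rewrite (gromov_product_comm w y z).
    pose proof (Rmin_r (gromov_product d w x y) (gromov_product d w z y)). lra.
  - pose proof (gromov_product_le_near_qgeod gyx f0 f1 y x s (gc t) (dt + e) w Hyx Hs Hv).
    rewrite (gromov_product_comm w x y).
    pose proof (Rmin_l (gromov_product d w y x) (gromov_product d w y z)). lra.
Qed.

Theorem gromov_product_ge_min :
  qgeod_space d q -> forall x y z w : X,
  Rmin (gromov_product d w x y) (gromov_product d w y z) - (7 * dt + 3 * q)
    <= gromov_product d w x z.
Proof.
  intros Hspace x y z w.
  apply le_epsilon; intros ep Hep. set (e := ep / 5).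
  destruct (Hspace x z) as [gc [c0 [c1 Hc]]].
  destruct (Hspace w x) as [ga [a0 [a1 Ha]]].
  destruct (Hspace z w) as [gb [b0 [b1 Hb]]].
  destruct (Hspace z y) as [gzy [e0 [e1 Hzy]]].
  destruct (Hspace y x) as [gyx [f0 [f1 Hyx]]].
  destruct (triangles_thin _ _ _ _ _ _ _ _ _ _ _ _ Ha Hc Hb) as [_ [Hside _]].
  pose proof Ha as [Ha01 [_ [Ha1 _]]]. pose proof Hb as [Hb01 [Hb0 _]].
  pose proof Hc as [Hc01 [Hc0 [Hc1 _]]].
  set (near_a := fun t => exists ta, a0 <= ta <= a1 /\ d (gc t) (ga ta) <= dt + e).
  set (near_b := fun t => exists tb, b0 <= tb <= b1 /\ d (gc t) (gb tb) <= dt + e).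
  assert (Hcover : forall t, c0 <= t <= c1 -> near_a t \/ near_b t).
  { intros t Ht.
    destruct (Hside (gc t) (ex_intro _ t (conj Ht eq_refl)) e ltac:(unfold e; lra))
      as [v [[[s [Hs ->]] | [s [Hs ->]]] Hv]]; [left | right]; now exists s. }
  assert (Hstart : near_a c0).
  { exists a1. split; [lra |]. rewrite Hc0, Ha1, dist_refl. unfold e; lra. }
  assert (Hend : near_b c1).
  { exists b0. split; [lra |]. rewrite Hc1, Hb0, dist_refl. unfold e; lra. }
  destruct (interval_crossing near_a near_b c0 c1 e Hc01 ltac:(unfold e; lra)
              Hstart Hend Hcover)
    as [t1 [t2 [Ht12 [Ht2 [Hclose [[ta [Hta Hua]] [tb [Htb Hub]]]]]]]].
  pose proof (qgeod_dist_le_close gc c0 c1 x z t1 t2 Hc Ht12 Ht2).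
  pose proof (gromov_product_ge_near_sides ga a0 a1 gb b0 b1 w x z (gc t1) (gc t2)
                ta tb (dt + e) Ha Hta Hua Hb Htb Hub).
  pose proof (gromov_product_min_le_on_side gc c0 c1 gzy e0 e1 gyx f0 f1 x y z w t1
                Hc Hzy Hyx ltac:(lra)).
  unfold e in *. lra.
Qed.

End ThinQuasiGeodesicSpace.

Theorem mainTheorem7 (X : Type) (d : X -> X -> R) (q dt : R) :
  0 <= q -> 0 <= dt ->
  is_metric d ->
  qgeod_space d q ->
  qgeod_triangles_thin d q dt ->
  forall x y z w : X,
    d x z + d y w <=
    Rmax (d x w + d y z) (d x y + d z w) + (56 * dt + 6 * q).
Proof.
  intros Hq Hdt Hd Hspace Hthin x y z w.
  pose proof (gromov_product_ge_min X d q dt Hq Hdt Hd Hthin Hspace x y z w) as Hgromov.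
  pose proof (four_point_of_gromov_product X d Hd _ x y z w Hgromov). lra.
Qed.
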